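(* For every positive integer $k$ there exists a GNN in the class $\mathcal{G}(L_k)$ that discriminates all graphs with at most $k+1$ nodes; that is, for any two graphs $G_1,G_2$ with at most $k+1$ nodes, the graph-level outputs of this GNN on $G_1$ and $G_2$ coincide if and only if $G_1\cong G_2$.
   Context: Graphs $G=(V,E)$ are finite, undirected, unweighted, with a self-loop at every vertex; $A$ is the adjacency matrix. For $v\in V$, $W_m(v)$ denotes the set of walks of length at most $m$ starting and ending at $v$; $L_k(v)$ is the subgraph formed by all vertices and edges occurring in walks of $W_{2k+1}(v)$ (all vertices within distance $k$ of $v$ together with all edges among them), and $D_k(v)$ is the analogous subgraph for $W_{2k}(v)$. A GNN layer computes $a^{(\ell)}_v=\mathrm{AGGREGATE}|_{G_v}(H^{(\ell-1)})$ and $h^{(\ell)}_v=\mathrm{COMBINE}(h^{(\ell-1)}_v,a^{(\ell)}_v)$, where the aggregation region $G_v$ is a connected subgraph containing $v$ and AGGREGATE (which may depend on the structure of $G_v$) is invariant under node relabeling. $\mathcal{G}(L_k)$ denotes the class of GNNs with aggregation region $G_v=L_k(v)$. The graph-level output of a GNN is a permutation-invariant function of the multiset of final node representations. *)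

From mathcomp Require Import all_boot.
Unset Printing Implicit Defensive.

Record graph := Graph {
  gn : nat;
  gadj : rel 'I_gn;
  gadj_refl : reflexive gadj;
  gadj_sym : symmetric gadj }.

Definition iso (G1 G2 : graph) : Prop :=
  exists f : 'I_(gn G1) -> 'I_(gn G2),
    bijective f /\ forall x y, gadj G2 (f x) (f y) = gadj G1 x y.

Fixpoint within (G : graph) (k : nat) (v u : 'I_(gn G)) : bool :=
  match k with
  | 0 => u == v
  | k'.+1 => [exists w, within G k' v w && gadj G w u]
  end.

Definition Lk_vert (G : graph) (k : nat) (v : 'I_(gn G)) : finType :=
  {u : 'I_(gn G) | within G k v u}.

Definition Lk_adj (G : graph) (k : nat) (v : 'I_(gn G)) : rel (Lk_vert G k v) :=
  fun x y => gadj G (val x) (val y).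

Record GNN (X : eqType) (Y : Type) := MkGNN {
  nlayers : nat;
  h0 : X;  (* initial (constant) node feature: graphs are unlabelled *)
  (* AGGREGATE of layer l+1: applied to the aggregation region
     (a finite vertex type, its edge relation, and the node features on it) *)
  aggr : nat -> forall T : finType, rel T -> (T -> X) -> X;
  comb : nat -> X -> X -> X;
  readout : seq X -> Y }.
Arguments nlayers {X Y}.
Arguments h0 {X Y}.
Arguments aggr {X Y}.
Arguments comb {X Y}.
Arguments readout {X Y}.

Definition aggr_invariant {X : eqType}
    (agg : forall T : finType, rel T -> (T -> X) -> X) : Prop :=
  forall (T1 T2 : finType) (e1 : rel T1) (e2 : rel T2)
         (h1 : T1 -> X) (h2 : T2 -> X) (f : T1 -> T2),
    bijective f ->
    (forall x y, e2 (f x) (f y) = e1 x y) ->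
    (forall x, h2 (f x) = h1 x) ->
    agg T1 e1 h1 = agg T2 e2 h2.

Definition wf_gnn {X : eqType} {Y : Type} (N : GNN X Y) : Prop :=
  (forall l, aggr_invariant (aggr N l)) /\
  (forall s1 s2 : seq X, perm_eq s1 s2 -> readout N s1 = readout N s2).

Fixpoint feat {X : eqType} {Y : Type} (N : GNN X Y) (k : nat) (G : graph)
    (l : nat) (v : 'I_(gn G)) : X :=
  match l with
  | 0 => h0 N
  | l'.+1 =>
      comb N l' (feat N k G l' v)
        (aggr N l' (Lk_vert G k v) (Lk_adj G k v)
           (fun u : Lk_vert G k v => feat N k G l' (val u)))
  end.

Definition gnn_out {X : eqType} {Y : Type} (N : GNN X Y) (k : nat) (G : graph) : Y :=
  readout N [seq feat N k G (nlayers N) v | v <- enum 'I_(gn G)].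

From HB Require Import structures.
From mathcomp Require Import all_boot.
From mathcomp Require Import boolp zify.
Set Implicit Arguments. Unset Strict Implicit.
Unset Printing Implicit Defensive.

(* On a graph with at most k+1 vertices, L_k(v) is the whole connected
   component of v. Hence the one-layer GNN whose aggregator returns the
   isomorphism class of its region labels every vertex by the isomorphism
   class of its component, and the graph output is the multiset of these
   labels. This multiset determines the graph up to isomorphism: match a
   component of G1 with an equally labelled one of G2, remove both (the label
   counts stay equal), and glue the component isomorphisms by induction. *)

Definition rel_iso (T1 T2 : finType) (e1 : rel T1) (e2 : rel T2) : Prop :=
  exists f : T1 -> T2, bijective f /\ forall x y, e2 (f x) (f y) = e1 x y.

Lemma rel_iso_sym (T1 T2 : finType) (e1 : rel T1) (e2 : rel T2) :
  rel_iso e1 e2 -> rel_iso e2 e1.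
Proof.
move=> [f [[g fK gK] f_e]]; exists g; split; first by exists f.
by move=> x y; rewrite -f_e !gK.
Qed.

Lemma rel_iso_trans (T1 T2 T3 : finType) (e1 : rel T1) (e2 : rel T2) (e3 : rel T3) :
  rel_iso e1 e2 -> rel_iso e2 e3 -> rel_iso e1 e3.
Proof.
move=> [f [f_bij f_e]] [g [g_bij g_e]]; exists (g \o f).
by split=> [|x y /=]; [exact: bij_comp | rewrite g_e f_e].
Qed.

Lemma rel_iso_enum (T : finType) (e : rel T) :
  rel_iso (fun i j : 'I_#|T| => e (enum_val i) (enum_val j)) e.
Proof.
exists enum_val; split=> //.
by exists enum_rank; [exact: enum_valK | exact: enum_rankK].
Qed.

(* The isomorphism class of [e : rel T] is the set of all relations on some
   ['I_n] isomorphic to [e]; unlike [e] itself it does not depend on [T], so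
   it can serve as a node feature. Its equality is decidable only classically. *)
Definition iso_class_type := forall n : nat, rel 'I_n -> Prop.
HB.instance Definition _ := gen_eqMixin iso_class_type.

Definition iso_class (T : finType) (e : rel T) : iso_class_type :=
  fun n r => rel_iso r e.
Arguments iso_class {T} e n r.

Lemma eq_iso_class (T1 T2 : finType) (e1 : rel T1) (e2 : rel T2) :
  iso_class e1 = iso_class e2 <-> rel_iso e1 e2.
Proof.
split=> [E | iso12].
  have r_e2 : iso_class e2 #|T1| (fun i j => e1 (enum_val i) (enum_val j)).
    by rewrite -E; exact: rel_iso_enum.
  exact: rel_iso_trans (rel_iso_sym (rel_iso_enum e1)) r_e2.
apply: functional_extensionality_dep => n; apply: funext => r.
apply: propext; split=> r_iso; first exact: rel_iso_trans r_iso iso12.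
exact: rel_iso_trans r_iso (rel_iso_sym iso12).
Qed.

Definition sub_rel (T : finType) (e : rel T) (P : pred T) : rel {x | P x} :=
  fun x y => e (val x) (val y).
Arguments sub_rel {T} e P.

Lemma eq_sub_rel_iso (T : finType) (e : rel T) (P Q : pred T) :
  P =1 Q -> rel_iso (sub_rel e P) (sub_rel e Q).
Proof.
move=> PQ.
have PQ_val (x : {x | P x}) : Q (val x) by rewrite -PQ (valP x).
have QP_val (x : {x | Q x}) : P (val x) by rewrite PQ (valP x).
exists (fun x => exist _ (val x) (PQ_val x)); split=> //.
by exists (fun x => exist _ (val x) (QP_val x)) => x; apply: val_inj.
Qed.

Section Components.

Variables (T : finType) (e : rel T).

Definition comp_class (v : T) : iso_class_type :=
  iso_class (sub_rel e (connect e v)).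

Definition edge_closed (A : {set T}) : Prop :=
  forall x y, e x y -> (x \in A) = (y \in A).

Definition class_count (A : {set T}) (c : iso_class_type) : nat :=
  #|[set x in A | comp_class x == c]|.

Lemma edge_closedT : edge_closed [set: T].
Proof. by move=> x y _; rewrite !inE. Qed.

Lemma edge_closedD (A C : {set T}) :
  edge_closed A -> edge_closed C -> edge_closed (A :\: C).
Proof. by move=> clA clC x y exy; rewrite !inE (clA _ _ exy) (clC _ _ exy). Qed.

Lemma edge_closed_cross (C : {set T}) x y :
  edge_closed C -> (x \in C) != (y \in C) -> e x y = false.
Proof. by move=> clC; apply: contraNF => /clC ->. Qed.

Lemma edge_closed_connect (A : {set T}) x y :
  edge_closed A -> connect e x y -> x \in A -> y \in A.
Proof.
move=> clA /connectP[p + ->]; elim: p x => [|z p IHp] x //= /andP[exz zp] xA.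
by apply: IHp zp _; rewrite -(clA _ _ exz).
Qed.

Lemma class_count_gt0 (A : {set T}) x : x \in A -> 0 < class_count A (comp_class x).
Proof. by move=> xA; apply/card_gt0P; exists x; rewrite inE xA eqxx. Qed.

Lemma class_countD (A C : {set T}) c0 :
  C \subset A -> {in C, forall x, comp_class x = c0} ->
  forall c, class_count A c = class_count (A :\: C) c + (c0 == c) * #|C|.
Proof.
move=> /subsetP CA C_c0 c; rewrite /class_count -(cardsID C [set x in A | _]) addnC.
congr (_ + _); first by apply: eq_card => x; rewrite !inE andbA.
case: eqP => [<- | ne_c0c]; rewrite ?mul1n ?mul0n.
  apply/eq_card => x; rewrite !inE.
  by case xC: (x \in C); rewrite ?andbF ?(CA _ xC) ?C_c0 ?eqxx.
apply/eq_card0 => x; rewrite !inE.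
by case xC: (x \in C); rewrite ?andbF // C_c0 //; case: eqP ne_c0c; rewrite ?andbF.
Qed.

Lemma class_countT c :
  class_count [set: T] c = count_mem c [seq comp_class v | v <- enum T].
Proof.
rewrite /class_count count_map cardE /enum_mem size_filter count_filter.
by apply: eq_count => x; rewrite !inE /= andbT.
Qed.

Hypothesis e_sym : symmetric e.

Lemma comp_class_connect v u : connect e v u -> comp_class u = comp_class v.
Proof.
move=> cvu; apply/eq_iso_class/eq_sub_rel_iso.
apply: same_connect; first exact: sym_connect_sym.
by rewrite (sym_connect_sym e_sym).
Qed.

Lemma component_edge_closed v : edge_closed [set u | connect e v u].
Proof.
move=> x y exy; rewrite !inE; apply/idP/idP => [cvx | cvy].
  exact: connect_trans cvx (connect1 exy).
by apply: connect_trans cvy (connect1 _); rewrite e_sym.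
Qed.

End Components.

Section PartialIso.

Variables (T1 T2 : finType) (e1 : rel T1) (e2 : rel T2).

Definition set_iso (A1 : {set T1}) (A2 : {set T2}) (f : T1 -> T2) : Prop :=
  [/\ {in A1 &, injective f}, {in A1, forall x, f x \in A2}, #|A1| = #|A2|
    & {in A1 &, forall x y, e2 (f x) (f y) = e1 x y}].

Lemma set_iso0 (f : T1 -> T2) : set_iso set0 set0 f.
Proof. by split=> [x|x||x]; rewrite ?inE ?cards0. Qed.

Lemma set_iso_sub (P1 : pred T1) (P2 : pred T2) (w0 : T2) :
  rel_iso (sub_rel e1 P1) (sub_rel e2 P2) ->
  exists f, set_iso [set x | P1 x] [set x | P2 x] f.
Proof.
move=> [phi [phi_bij phi_e]].
pose f x := if insub x is Some y then val (phi y) else w0.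
have fE x (P1x : P1 x) : f x = val (phi (exist _ x P1x)) by rewrite /f insubT.
exists f; split.
- move=> x y; rewrite !inE => P1x P1y; rewrite (fE x P1x) (fE y P1y).
  by move=> /val_inj /(bij_inj phi_bij) [].
- by move=> x; rewrite !inE => P1x; rewrite (fE x P1x) (valP (phi _)).
- by have := bij_eq_card phi_bij; rewrite !card_sig !cardsE.
- by move=> x y; rewrite !inE => P1x P1y; rewrite (fE x P1x) (fE y P1y); exact: phi_e.
Qed.

Lemma set_iso_glue (A1 C1 : {set T1}) (A2 C2 : {set T2}) (f g : T1 -> T2) :
  C1 \subset A1 -> C2 \subset A2 -> edge_closed e1 C1 -> edge_closed e2 C2 ->
  set_iso C1 C2 f -> set_iso (A1 :\: C1) (A2 :\: C2) g ->
  set_iso A1 A2 (fun x => if x \in C1 then f x else g x).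
Proof.
move=> /subsetP C1A1 /subsetP C2A2 clC1 clC2.
move=> [f_inj f_C2 card_C f_e] [g_inj g_D2 card_D g_e].
have inD1 x : x \in A1 -> x \notin C1 -> x \in A1 :\: C1 by rewrite inE => -> ->.
have h_C2 x : x \in A1 -> ((if x \in C1 then f x else g x) \in C2) = (x \in C1).
  move=> xA1; case: ifPn => [/f_C2 // | xC1].
  by have := g_D2 _ (inD1 _ xA1 xC1); rewrite inE => /andP[/negbTE].
split.
- move=> x y xA1 yA1 hxy.
  have xy_C1 : (x \in C1) = (y \in C1) by rewrite -(h_C2 _ xA1) -(h_C2 _ yA1) hxy.
  move: hxy; rewrite -xy_C1; case: ifPn => xC1.
    by apply: f_inj; rewrite // -xy_C1.
  by apply: g_inj; apply: inD1; rewrite // -xy_C1.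
- move=> x xA1; case: ifPn => [/f_C2/C2A2 // | xC1].
  by have := g_D2 _ (inD1 _ xA1 xC1); rewrite inE => /andP[].
- by rewrite -(cardsID C1 A1) -(cardsID C2 A2) !(setIidPr _) ?card_C ?card_D //;
    apply/subsetP.
- move=> x y xA1 yA1.
  have := h_C2 _ xA1; have := h_C2 _ yA1.
  case xC1: (x \in C1); case yC1: (y \in C1) => hyC2 hxC2.
  + exact: f_e.
  + by rewrite !(edge_closed_cross clC1, edge_closed_cross clC2)
      ?xC1 ?yC1 ?hxC2 ?hyC2.
  + by rewrite !(edge_closed_cross clC1, edge_closed_cross clC2)
      ?xC1 ?yC1 ?hxC2 ?hyC2.
  + by apply: g_e; apply: inD1; rewrite ?xC1 ?yC1.
Qed.

Lemma set_isoT_rel_iso (f : T1 -> T2) :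
  set_iso [set: T1] [set: T2] f -> rel_iso e1 e2.
Proof.
move=> [f_inj _ card_T f_e]; exists f; split; last first.
  by move=> x y; exact: f_e (in_setT x) (in_setT y).
apply: inj_card_bij => [x y | ]; first exact: f_inj (in_setT x) (in_setT y).
by rewrite -!cardsT card_T.
Qed.

End PartialIso.

Section ComponentMatching.

Variables (T1 T2 : finType) (e1 : rel T1) (e2 : rel T2).
Hypotheses (e1_sym : symmetric e1) (e2_sym : symmetric e2).

Lemma set_iso_of_class_count (w0 : T2) (A1 : {set T1}) (A2 : {set T2}) :
  edge_closed e1 A1 -> edge_closed e2 A2 ->
  (forall c, class_count e1 A1 c = class_count e2 A2 c) ->
  exists f, set_iso e1 e2 A1 A2 f.
Proof.
have [m] := ubnP #|A1|; elim: m A1 A2 => // m IHm A1 A2 A1_lt clA1 clA2 count12.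
have [A1_0 | [v vA1]] := set_0Vmem A1.
  have A2_0 : A2 = set0.
    have [// | [w wA2]] := set_0Vmem A2.
    have := class_count_gt0 e2 wA2; rewrite -count12 => /card_gt0P[x].
    by rewrite inE A1_0 inE.
  by exists (fun=> w0); rewrite A1_0 A2_0; exact: set_iso0.
have [w /andP[wA2 /eqP class_w]] :
    exists w, (w \in A2) && (comp_class e2 w == comp_class e1 v).
  have := class_count_gt0 e1 vA1; rewrite count12 => /card_gt0P[w].
  by rewrite inE; exists w.
set C1 := [set u | connect e1 v u]; set C2 := [set u | connect e2 w u].
have clC1 := component_edge_closed e1_sym v.
have clC2 := component_edge_closed e2_sym w.
have iso_C : rel_iso (sub_rel e1 (connect e1 v)) (sub_rel e2 (connect e2 w)).
  by apply/eq_iso_class; exact: esym class_w.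
have [f f_iso] := set_iso_sub w iso_C.
have C1A1 : C1 \subset A1.
  by apply/subsetP => u; rewrite inE => cvu; exact: edge_closed_connect clA1 cvu vA1.
have C2A2 : C2 \subset A2.
  by apply/subsetP => u; rewrite inE => cwu; exact: edge_closed_connect clA2 cwu wA2.
have C1_class : {in C1, forall u, comp_class e1 u = comp_class e1 v}.
  by move=> u; rewrite inE; exact: comp_class_connect.
have C2_class : {in C2, forall u, comp_class e2 u = comp_class e1 v}.
  by move=> u; rewrite inE -class_w; exact: comp_class_connect.
have [g g_iso] : exists g, set_iso e1 e2 (A1 :\: C1) (A2 :\: C2) g.
  apply: IHm; [| exact: edge_closedD | exact: edge_closedD | move=> c].
    have : A1 :\: C1 \proper A1.
      by apply/properP; split; [exact: subsetDl | exists v; rewrite ?inE ?connect0].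
    by move/proper_card; rewrite ltnS in A1_lt; lia.
  move: (count12 c); rewrite (class_countD C1A1 C1_class) (class_countD C2A2 C2_class).
  by rewrite (_ : #|C1| = #|C2|); [move/addIn | case: f_iso].
exists (fun x => if x \in C1 then f x else g x).
exact: set_iso_glue C1A1 C2A2 clC1 clC2 f_iso g_iso.
Qed.

End ComponentMatching.

Section Neighbourhoods.

Variable G : graph.

Lemma within_connect k v u : within G k v u -> connect (gadj G) v u.
Proof.
elim: k u => [|k IHk] u /=; first by move/eqP->.
by case/existsP=> w /andP[/IHk cvw ewu]; exact: connect_trans cvw (connect1 ewu).
Qed.

Lemma within_path v p : path (gadj G) v p -> within G (size p) v (last v p).
Proof.
elim/last_ind: p => [|p x IHp] /=; first by [].
rewrite rcons_path size_rcons last_rcons => /andP[/IHp vp ex] /=.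
by apply/existsP; exists (last v p); rewrite vp ex.
Qed.

Lemma within_mono m k v u : m <= k -> within G m v u -> within G k v u.
Proof.
elim: k => [|k IHk]; first by rewrite leqn0 => /eqP->.
rewrite leq_eqVlt => /orP[/eqP-> // | /IHk within_k /within_k within_ku] /=.
by apply/existsP; exists u; rewrite within_ku gadj_refl.
Qed.

(* A shortest path visits each of the at most [k.+1] vertices once, so it
   has at most [k] edges: [L_k(v)] is the whole component of [v]. *)
Lemma within_connectE k v : gn G <= k.+1 -> within G k v =1 connect (gadj G) v.
Proof.
move=> G_small u; apply/idP/idP => [|/connectP[p vp ->]].
  exact: within_connect.
have [q vq q_uniq _] := shortenP vp.
apply: within_mono (within_path vq).
have := max_card (mem (v :: q)); rewrite (card_uniqP q_uniq) card_ord /=.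
by move=> /leq_trans/(_ G_small); rewrite ltnS.
Qed.

Lemma Lk_iso_class k v :
  gn G <= k.+1 -> iso_class (Lk_adj G k v) = comp_class (gadj G) v.
Proof. by move=> G_small; apply/eq_iso_class/eq_sub_rel_iso/within_connectE. Qed.

End Neighbourhoods.

Section GraphIso.

Variables (G1 G2 : graph).
Variables (f : 'I_(gn G1) -> 'I_(gn G2)) (g : 'I_(gn G2) -> 'I_(gn G1)).
Hypotheses (fK : cancel f g) (gK : cancel g f).
Hypothesis f_adj : forall x y, gadj G2 (f x) (f y) = gadj G1 x y.

Lemma within_iso k v u : within G2 k (f v) (f u) = within G1 k v u.
Proof.
elim: k u => [|k IHk] u /=; first by rewrite (inj_eq (can_inj fK)).
apply/existsP/existsP => [[w /andP[vw ewu]] | [w /andP[vw ewu]]].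
  by exists (g w); rewrite -IHk gK vw /= -f_adj gK ewu.
by exists (f w); rewrite IHk f_adj vw ewu.
Qed.

Lemma Lk_iso_class_iso k v :
  iso_class (Lk_adj G1 k v) = iso_class (Lk_adj G2 k (f v)).
Proof.
apply/eq_iso_class.
have f_within (x : Lk_vert G1 k v) : within G2 k (f v) (f (val x)).
  by rewrite within_iso (valP x).
have g_within (y : Lk_vert G2 k (f v)) : within G1 k v (g (val y)).
  by rewrite -within_iso gK (valP y).
exists (fun x => exist _ (f (val x)) (f_within x)); split; last first.
  by move=> x y; rewrite /Lk_adj /= f_adj.
exists (fun y => exist _ (g (val y)) (g_within y)) => x.
  by apply: val_inj; rewrite /= fK.
by apply: val_inj; rewrite /= gK.
Qed.

Lemma perm_enum_iso : perm_eq [seq f v | v <- enum 'I_(gn G1)] (enum 'I_(gn G2)).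
Proof.
apply: uniq_perm; [| exact: enum_uniq | move=> y].
  by rewrite map_inj_uniq ?enum_uniq //; exact: can_inj fK.
by rewrite mem_enum; apply/mapP; exists (g y); rewrite ?mem_enum ?gK.
Qed.

End GraphIso.

Definition Lk_classes (k : nat) (G : graph) : seq iso_class_type :=
  [seq iso_class (Lk_adj G k v) | v <- enum 'I_(gn G)].

Definition comp_classes (G : graph) : seq iso_class_type :=
  [seq comp_class (gadj G) v | v <- enum 'I_(gn G)].

Lemma Lk_classesE k G : gn G <= k.+1 -> Lk_classes k G = comp_classes G.
Proof. by move=> G_small; apply: eq_map => v; exact: Lk_iso_class. Qed.

Lemma perm_Lk_classes k G1 G2 :
  iso G1 G2 -> perm_eq (Lk_classes k G1) (Lk_classes k G2).
Proof.
case=> f [[g fK gK] f_adj].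
have -> : Lk_classes k G1 =
          [seq iso_class (Lk_adj G2 k v) | v <- [seq f v | v <- enum 'I_(gn G1)]].
  by rewrite -map_comp; apply: eq_map => v; exact: Lk_iso_class_iso.
exact/perm_map/perm_enum_iso.
Qed.

Lemma iso_of_perm_comp_classes G1 G2 :
  perm_eq (comp_classes G1) (comp_classes G2) -> iso G1 G2.
Proof.
move=> perm12.
have n12 : gn G1 = gn G2.
  by move/perm_size: perm12; rewrite !size_map -!enumT !size_enum_ord.
have [n1_0 | n1_gt0] := posnP (gn G1).
  exists (cast_ord n12); split.
    by exists (cast_ord (esym n12)); [exact: cast_ordK | exact: cast_ordKV].
  by move=> x; have := ltn_ord x; rewrite {2}n1_0.
have count12 c : class_count (gadj G1) setT c = class_count (gadj G2) setT c.
  by rewrite !class_countT; exact/permP.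
have [f f_iso] := set_iso_of_class_count (@gadj_sym G1) (@gadj_sym G2)
  (cast_ord n12 (Ordinal n1_gt0)) (@edge_closedT _ (gadj G1))
  (@edge_closedT _ (gadj G2)) count12.
exact: set_isoT_rel_iso f_iso.
Qed.

Definition class_gnn : GNN iso_class_type (seq iso_class_type -> bool) :=
  @MkGNN _ _ 1 (fun _ _ => False) (fun _ _ e _ => iso_class e)
    (fun _ _ a => a) perm_eq.

Lemma class_gnn_wf : wf_gnn class_gnn.
Proof.
split=> [l T1 T2 e1 e2 h1 h2 f f_bij f_adj _ | s1 s2 /permPl perm12].
  by apply/eq_iso_class; exists f.
exact: funext.
Qed.

Lemma gnn_out_class_gnn k G : gnn_out class_gnn k G = perm_eq (Lk_classes k G).
Proof. by []. Qed.

Lemma perm_eq_fun_eq (T : eqType) (s1 s2 : seq T) :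
  (perm_eq s1 = perm_eq s2) = perm_eq s1 s2.
Proof. by rewrite propeqE; split=> [-> // | /permPl perm12]; exact: funext. Qed.

Theorem theorem4 (k : nat) (hk : 0 < k) :
  exists (X : eqType) (Y : Type) (N : GNN X Y),
    wf_gnn N /\
    forall G1 G2 : graph, gn G1 <= k.+1 -> gn G2 <= k.+1 ->
      (gnn_out N k G1 = gnn_out N k G2 <-> iso G1 G2).
Proof.
exists iso_class_type, (seq iso_class_type -> bool), class_gnn.
split=> [| G1 G2 G1_small G2_small]; first exact: class_gnn_wf.
rewrite !gnn_out_class_gnn perm_eq_fun_eq; split; last exact: perm_Lk_classes.
by rewrite !Lk_classesE //; exact: iso_of_perm_comp_classes.
Qed.
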